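(* Let $H$ be a complex Hilbert space and let $A$ and $B$ be self-adjoint operators in $H$, at least one of which is positive, such that $D(A)=D(B)$ and $D(BA)\subset D(AB)$. Let $T=A+iB$ (with domain $D(A)=D(B)$). If $T^2\subset 0$, then $T\in B(H)$, $T$ is normal, and $T=0$ everywhere on $H$.
   Context: Products are taken on natural domains $D(ST)=\{x\in D(T):Tx\in D(S)\}$ and sums on $D(S+T)=D(S)\cap D(T)$. $S\subset T$ means $D(S)\subset D(T)$ and $S=T$ on $D(S)$; $T^2\subset 0$ means $T^2x=0$ for all $x\in D(T^2)$, where $0$ is the zero operator on $H$. A self-adjoint $A$ is positive if $\langle Ax,x\rangle\geq 0$ for all $x\in D(A)$. $B(H)$ is the algebra of everywhere defined bounded operators on $H$; a closed densely defined $T$ is normal if $TT^*=T^*T$. *)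

From HB Require Import structures.
From mathcomp Require Import all_boot all_order all_algebra.
From mathcomp Require Import complex.
From mathcomp Require Import reals.
Set Implicit Arguments. Unset Strict Implicit. Unset Printing Implicit Defensive.
Import Order.TTheory GRing.Theory Num.Theory.
Local Open Scope ring_scope.
Local Open Scope complex_scope.

Section Hilbert.
Variables (R : realType) (H : lmodType R[i]) (ip : H -> H -> R[i]).

Definition hnorm (x : H) : R := Num.sqrt (complex.Re (ip x x)).

Definition is_inner_product : Prop :=
  [/\ (forall (a : R[i]) (x y z : H), ip (a *: x + y) z = a * ip x z + ip y z),
      (forall x y : H, ip y x = (ip x y)^*),
      (forall x : H, 0 <= ip x x) &
      (forall x : H, ip x x = 0 -> x = 0)].

Definition hcauchy (u : nat -> H) : Prop :=
  forall e : R, 0 < e -> exists N : nat, forall m n : nat,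
    (N <= m)%N -> (N <= n)%N -> hnorm (u m - u n) < e.

Definition hconverges (u : nat -> H) (l : H) : Prop :=
  forall e : R, 0 < e -> exists N : nat, forall n : nat,
    (N <= n)%N -> hnorm (u n - l) < e.

Definition is_hilbert : Prop :=
  is_inner_product /\
  (forall u : nat -> H, hcauchy u -> exists l : H, hconverges u l).

(* a (possibly unbounded) operator in H: a domain and an action on it;
   the values of [app] outside [dom] are irrelevant *)
Record op := Op { dom : H -> Prop; app : H -> H }.

Definition op_linear (T : op) : Prop :=
  [/\ dom T 0,
      (forall (a : R[i]) (x y : H), dom T x -> dom T y -> dom T (a *: x + y)) &
      (forall (a : R[i]) (x y : H), dom T x -> dom T y ->
          app T (a *: x + y) = a *: app T x + app T y)].

Definition densely_defined (T : op) : Prop :=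
  forall (x : H) (e : R), 0 < e -> exists y : H, dom T y /\ hnorm (x - y) < e.

Definition op_closed (T : op) : Prop :=
  forall (u : nat -> H) (x y : H), (forall n, dom T (u n)) ->
    hconverges u x -> hconverges (fun n => app T (u n)) y ->
    dom T x /\ app T x = y.

Definition is_adjoint (T S : op) : Prop :=
  (forall y : H, dom S y <->
     exists z : H, forall x : H, dom T x -> ip (app T x) y = ip x z) /\
  (forall x y : H, dom T x -> dom S y -> ip (app T x) y = ip x (app S y)).

Definition self_adjoint (A : op) : Prop :=
  op_linear A /\ densely_defined A /\ is_adjoint A A.

Definition op_positive (A : op) : Prop :=
  forall x : H, dom A x -> 0 <= ip (app A x) x.

Definition op_mul (S T : op) : op :=
  Op (fun x => dom T x /\ dom S (app T x)) (fun x => app S (app T x)).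

Definition op_add (S T : op) : op :=
  Op (fun x => dom S x /\ dom T x) (fun x => app S x + app T x).

Definition op_scale (a : R[i]) (T : op) : op :=
  Op (dom T) (fun x => a *: app T x).

Definition op_le (S T : op) : Prop :=
  forall x : H, dom S x -> dom T x /\ app S x = app T x.

Definition op_eq (S T : op) : Prop := op_le S T /\ op_le T S.

Definition zero_op : op := Op (fun _ => True) (fun _ => 0).

Definition in_BH (T : op) : Prop :=
  (forall x : H, dom T x) /\
  exists M : R, forall x : H, hnorm (app T x) <= M * hnorm x.

Definition op_normal (T : op) : Prop :=
  [/\ op_linear T, op_closed T, densely_defined T &
      exists S : op, is_adjoint T S /\ op_eq (op_mul T S) (op_mul S T)].

End Hilbert.

From HB Require Import structures.
From mathcomp Require Import all_boot all_order all_algebra.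
From mathcomp Require Import complex reals classical_sets boolp.
From mathcomp Require Import ring lra.
Import Order.TTheory GRing.Theory Num.Theory.
Local Open Scope ring_scope.
Local Open Scope complex_scope.
Set Implicit Arguments. Unset Strict Implicit. Unset Printing Implicit Defensive.

(* If Ty = 0 then Ay = -iBy, so the real numbers <Ay,y>
   and <By,y> both vanish; by Cauchy-Schwarz for the positive form <P.,.>
   (P the positive one of A, B) this gives Py _|_ D(P), hence Ay and By are
   orthogonal to D(A).  For u in D(A^2), D(BA) <= D(AB) gives Bu in D(A), so
   y = Tu lies in D(T) with Ty = T^2 u = 0; then |Tu|^2 = <u,Ay> + i<u,By> = 0,
   and applying the same fact to u yields Au = Bu = 0.  Since A is
   self-adjoint on a complete space, A + i maps D(A) onto H (a minimiser of
   |(A + i)v - x| over D(A) exists, and its residual is orthogonal to the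
   range, hence zero).  Writing x in D(A) as (A + i)u puts u in D(A^2), so
   x = iu and Ax = Bx = 0: A vanishes on D(A), which forces D(A) = H. *)

(* The statement uses the complex-number unit [0 +i* 1] and conjugation
   [conjc]; the [ring_scope] notations of [Num.Theory] would otherwise
   denote the generic [Num.imaginary] and [Num.conj] inside ring expressions. *)
Local Notation "''i'" := (@Complex _ 0 1) : ring_scope.
Local Notation "x ^*" := (conjc x) : ring_scope.
Local Notation Re := complex.Re.
Local Notation Im := complex.Im.

Section ComplexFacts.
Variable R : rcfType.
Implicit Types z : R[i].

Lemma mulii : 'i * 'i = -1 :> R[i].
Proof. by apply/eqP; rewrite eq_complex /=; apply/andP; split; apply/eqP; ring. Qed.

Lemma conj_i : 'i^* = - 'i :> R[i].
Proof. by apply/eqP; rewrite eq_complex /= oppr0 !eqxx. Qed.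

Lemma Re_conj z : Re z^* = Re z.
Proof. by case: z. Qed.

Lemma Re_realM (t : R) z : Re (t%:C * z) = t * Re z.
Proof. by case: z => a b /=; ring. Qed.

Lemma Re_iM z : Re ('i * z) = - Im z.
Proof. by case: z => a b /=; ring. Qed.

Lemma Re_conjiM z : Re ('i^* * z) = Im z.
Proof. by rewrite conj_i mulNr raddfN /= Re_iM opprK. Qed.

Lemma complex_eq0 z : Re z = 0 -> Im z = 0 -> z = 0.
Proof. by case: z => a b /= -> ->. Qed.

End ComplexFacts.

Lemma quadratic_ge0_linear_eq0 (R : realFieldType) (a b : R) :
  (forall t : R, 0 <= 2 * t * a + t ^+ 2 * b) -> a = 0.
Proof.
(* evaluate at [t = - a s] with [s = 1 / (|b| + 1)]: the value is [<= - a^2 s] *)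
move=> hab; set s := (`|b| + 1)^-1.
have s_gt0 : 0 < s by rewrite invr_gt0 ltr_wpDl.
have sb : s * `|b| = 1 - s by rewrite /s; field; rewrite lt0r_neq0 // ltr_wpDl.
have a2s2_ge0 : 0 <= a ^+ 2 * s ^+ 2 by rewrite mulr_ge0 ?sqr_ge0.
have b_le : a ^+ 2 * s ^+ 2 * b <= a ^+ 2 * s * (1 - s).
  rewrite -sb (_ : a ^+ 2 * s * (s * `|b|) = a ^+ 2 * s ^+ 2 * `|b|); last by ring.
  by rewrite ler_wpM2l ?ler_norm.
have := hab (- a * s); rewrite (_ : (- a * s) ^+ 2 = a ^+ 2 * s ^+ 2); last by ring.
move=> h; have : a ^+ 2 * s <= 0 by lra.
rewrite pmulr_lle0 // => a2_le0.
by apply/eqP; rewrite -sqrf_eq0 eq_le a2_le0 sqr_ge0.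
Qed.

Section VanishingSequences.
Variable R : archiRealFieldType.
Implicit Types s : nat -> R.

Definition vanishing s :=
  forall e : R, 0 < e -> exists N, forall n, (N <= n)%N -> `|s n| < e.

Lemma vanishingD s1 s2 :
  vanishing s1 -> vanishing s2 -> vanishing (fun n => s1 n + s2 n).
Proof.
move=> h1 h2 e e0; have e2 : 0 < e / 2 by rewrite divr_gt0.
have [N1 hN1] := h1 _ e2; have [N2 hN2] := h2 _ e2.
exists (maxn N1 N2) => n; rewrite geq_max => /andP[n1 n2].
apply: le_lt_trans (ler_normD _ _) _.
by have := hN1 n n1; have := hN2 n n2; lra.
Qed.

Lemma vanishingN s : vanishing s -> vanishing (fun n => - s n).
Proof. by move=> h e /h[N hN]; exists N => n /hN; rewrite normrN. Qed.

Lemma vanishingB s1 s2 :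
  vanishing s1 -> vanishing s2 -> vanishing (fun n => s1 n - s2 n).
Proof. by move=> h1 /vanishingN; apply: vanishingD. Qed.

Lemma vanishingZ k s : vanishing s -> vanishing (fun n => k * s n).
Proof.
move=> h e e0; have k1 : 0 < `|k| + 1 by rewrite ltr_wpDl.
have [N hN] := h _ (divr_gt0 e0 k1); exists N => n /hN hn.
have ek : e / (`|k| + 1) * (`|k| + 1) = e by rewrite divfK // lt0r_neq0.
by rewrite normrM; have := normr_ge0 k; have := normr_ge0 (s n); nra.
Qed.

Lemma vanishing_inv_succ : vanishing (fun n => n.+1%:R^-1).
Proof.
move=> e e0; exists (Num.bound e^-1) => n hn.
rewrite ger0_norm ?invr_ge0 ?ler0n // -[e]invrK ltf_pV2 ?posrE ?invr_gt0 ?ltr0n //.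
apply: lt_le_trans (archi_boundP _) _; first by rewrite invr_ge0 ltW.
by rewrite ler_nat (leq_trans hn).
Qed.

Lemma vanishing_lb K s : (forall n, K <= s n) -> vanishing s -> K <= 0.
Proof.
move=> hK hs; rewrite leNgt; apply/negP => K0.
have [N hN] := hs K K0; have := hN N (leqnn N); have := hK N.
by rewrite ltr_norml => ? /andP[? ?]; lra.
Qed.

Lemma vanishing_const K s : (forall n, K = s n) -> vanishing s -> K = 0.
Proof.
move=> hK hs; apply/eqP; rewrite eq_le; apply/andP; split.
  by apply: (vanishing_lb _ hs) => n; rewrite (hK n).
rewrite -oppr_le0; apply: (vanishing_lb _ (vanishingN hs)) => n.
by rewrite (hK n).
Qed.

End VanishingSequences.

Section InnerProduct.
Variables (R : realType) (H : lmodType R[i]) (ip : H -> H -> R[i]).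
Hypothesis IP : is_inner_product ip.
Implicit Types (a : R[i]) (x y z : H).

Lemma ipDZl a x y z : ip (a *: x + y) z = a * ip x z + ip y z.
Proof. by case: IP. Qed.

Lemma ipC x y : ip y x = (ip x y)^*.
Proof. by case: IP. Qed.

Lemma ipDl x y z : ip (x + y) z = ip x z + ip y z.
Proof. by rewrite -[x in LHS]scale1r ipDZl mul1r. Qed.

Lemma ip0l z : ip 0 z = 0.
Proof. by apply: (addrI (ip 0 z)); rewrite -ipDl !addr0. Qed.

Lemma ipZl a x z : ip (a *: x) z = a * ip x z.
Proof. by rewrite -[a *: x]addr0 ipDZl ip0l addr0. Qed.

Lemma ipNl x z : ip (- x) z = - ip x z.
Proof. by rewrite -scaleN1r ipZl mulN1r. Qed.

Lemma ipBl x y z : ip (x - y) z = ip x z - ip y z.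
Proof. by rewrite ipDl ipNl. Qed.

Lemma ipDr x y z : ip z (x + y) = ip z x + ip z y.
Proof. by rewrite ipC (ipC x z) (ipC y z) -rmorphD ipDl. Qed.

Lemma ip0r z : ip z 0 = 0.
Proof. by rewrite ipC ip0l conjc0. Qed.

Lemma ipZr a x z : ip z (a *: x) = a^* * ip z x.
Proof. by rewrite ipC (ipC x z) -rmorphM ipZl. Qed.

Lemma ipNr x z : ip z (- x) = - ip z x.
Proof. by rewrite ipC (ipC x z) -rmorphN ipNl. Qed.

Lemma ipBr x y z : ip z (x - y) = ip z x - ip z y.
Proof. by rewrite ipDr ipNr. Qed.

Lemma ip_self_eq0 x : ip x x = 0 -> x = 0.
Proof. by case: IP => _ _ _; apply. Qed.

Definition sqnorm x : R := Re (ip x x).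

Lemma ip_sqnorm x : ip x x = (sqnorm x)%:C.
Proof.
case: IP => _ _ /(_ x) + _; rewrite lecE /sqnorm.
by case: (ip x x) => a b /= /andP[/eqP -> _].
Qed.

Lemma sqnorm_ge0 x : 0 <= sqnorm x.
Proof. by case: IP => _ _ /(_ x) + _; rewrite ip_sqnorm lecR. Qed.

Lemma sqnorm_eq0 x : sqnorm x = 0 -> x = 0.
Proof. by move=> x0; apply: ip_self_eq0; rewrite ip_sqnorm x0. Qed.

Lemma Re_ipC x y : Re (ip y x) = Re (ip x y).
Proof. by rewrite ipC Re_conj. Qed.

Lemma sqnormD x y : sqnorm (x + y) = sqnorm x + sqnorm y + 2 * Re (ip x y).
Proof. by rewrite /sqnorm ipDl !ipDr !raddfD /= (Re_ipC x y); ring. Qed.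

Lemma sqnormN x : sqnorm (- x) = sqnorm x.
Proof. by rewrite /sqnorm ipNl ipNr opprK. Qed.

Lemma sqnormB x y : sqnorm (x - y) = sqnorm x + sqnorm y - 2 * Re (ip x y).
Proof. by rewrite sqnormD sqnormN ipNr raddfN /= mulrN. Qed.

Lemma sqnormZ (t : R) x : sqnorm (t%:C *: x) = t ^+ 2 * sqnorm x.
Proof. by rewrite /sqnorm ipZl ipZr conjc_real !Re_realM mulrA -expr2. Qed.

Lemma sqnormZi x : sqnorm ('i *: x) = sqnorm x.
Proof. by rewrite /sqnorm ipZl ipZr mulrA conj_i mulrN mulii opprK mul1r. Qed.

Lemma parallelogram x y :
  sqnorm (x + y) + sqnorm (x - y) = 2 * sqnorm x + 2 * sqnorm y.
Proof. by rewrite sqnormD sqnormB; ring. Qed.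

Lemma Re_ipZil x y : Re (ip ('i *: x) y) = - Re (ip x ('i *: y)).
Proof. by rewrite ipZl ipZr Re_iM Re_conjiM. Qed.

Lemma hnorm_ltr x (e : R) : 0 < e -> (hnorm ip x < e) = (sqnorm x < e ^+ 2).
Proof.
move=> e0; rewrite /hnorm -/(sqnorm x) -[e in LHS]gtr0_norm // -sqrtr_sqr.
by rewrite ltr_sqrt ?exprn_gt0.
Qed.

Lemma Re_ip_eq0_of_min r y :
  (forall t : R, sqnorm r <= sqnorm (r + t%:C *: y)) -> Re (ip r y) = 0.
Proof.
move=> rmin; apply: (@quadratic_ge0_linear_eq0 _ _ (sqnorm y)) => t.
by have := rmin t; rewrite sqnormD sqnormZ ipZr conjc_real Re_realM; lra.
Qed.

Lemma eq0_of_Re_eq0 (D : H -> Prop) (f : H -> R[i]) :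
  (forall w, D w -> D ('i *: w) /\ f ('i *: w) = 'i * f w) ->
  (forall w, D w -> Re (f w) = 0) -> forall w, D w -> f w = 0.
Proof.
move=> fi fRe w Dw; apply: complex_eq0; first exact: fRe.
have [Diw fiw] := fi w Dw; have := fRe _ Diw; rewrite fiw Re_iM => /eqP.
by rewrite oppr_eq0 => /eqP.
Qed.

Lemma hconverges_vanishing u l :
  hconverges ip u l -> vanishing (fun n => sqnorm (u n - l)).
Proof.
move=> ul e e0; have se : 0 < Num.sqrt e by rewrite sqrtr_gt0.
have [N hN] := ul _ se.
exists N => n /hN; rewrite ger0_norm ?sqnorm_ge0 //.
by rewrite hnorm_ltr ?sqrtr_gt0 // sqr_sqrtr // ltW.
Qed.

Lemma vanishing_Re_ip c y :
  vanishing (fun n => sqnorm (c n)) -> vanishing (fun n => Re (ip (c n) y)).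
Proof.
move=> hc e e0; have y_ge0 := sqnorm_ge0 y.
set s := e / (sqnorm y + 1).
have s_gt0 : 0 < s by rewrite divr_gt0 // ltr_wpDl.
have se : s * (sqnorm y + 1) = e by rewrite divfK // lt0r_neq0 // ltr_wpDl.
have [N hN] := hc (e * s) (mulr_gt0 e0 s_gt0).
exists N => n /hN; rewrite ger0_norm ?sqnorm_ge0 // => cn.
(* [2 s |Re <c n, y>| <= |c n|^2 + s^2 |y|^2], by expanding [|c n -+ s y|^2 >= 0] *)
have := sqnorm_ge0 (c n - s%:C *: y); have := sqnorm_ge0 (c n + s%:C *: y).
rewrite sqnormB sqnormD sqnormZ ipZr conjc_real !Re_realM ltr_norml.
by move=> hp hm; apply/andP; split; nra.
Qed.

Lemma hcauchy_of_bound u (s : nat -> R) : vanishing s ->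
  (forall m n, sqnorm (u m - u n) <= s m + s n) -> hcauchy ip u.
Proof.
move=> hs hu e e0; have e2 : 0 < e ^+ 2 / 2 by rewrite divr_gt0 ?exprn_gt0.
have [N hN] := hs _ e2; exists N => m n /hN + /hN; rewrite hnorm_ltr //.
have := hu m n; rewrite !ltr_norml => + /andP[_ +] /andP[_ +].
by lra.
Qed.

Lemma hconverges_eq0 u l : (forall n, u n = 0) -> hconverges ip u l -> l = 0.
Proof.
move=> u0 /hconverges_vanishing ul; apply: sqnorm_eq0; apply/eqP.
rewrite eq_le sqnorm_ge0 andbT; apply: (vanishing_lb _ ul) => n.
by rewrite u0 sub0r sqnormN.
Qed.

Lemma dense_orth_eq0 (P : op H) z :
  densely_defined ip P -> (forall y, dom P y -> ip y z = 0) -> z = 0.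
Proof.
move=> dense zP; apply: sqnorm_eq0; apply/eqP.
rewrite eq_le sqnorm_ge0 andbT leNgt; apply/negP => z_gt0.
have sz : 0 < Num.sqrt (sqnorm z) by rewrite sqrtr_gt0.
have [y [Py]] := dense z _ sz.
rewrite hnorm_ltr ?sqrtr_gt0 // sqr_sqrtr ?ltW // sqnormB ipC zP // conjc0 /=.
by have := sqnorm_ge0 y; lra.
Qed.

Section LinearOperator.
Variable P : op H.
Hypothesis linP : op_linear P.

Lemma dom0 : dom P 0.
Proof. by case: linP. Qed.

Lemma domD x y : dom P x -> dom P y -> dom P (x + y).
Proof. by case: linP => _ domDZ _ Px Py; rewrite -[x]scale1r; apply: domDZ. Qed.

Lemma domZ a x : dom P x -> dom P (a *: x).
Proof. by case: linP => _ domDZ _ Px; rewrite -[_ *: _]addr0; apply: domDZ => //; apply: dom0. Qed.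

Lemma domB x y : dom P x -> dom P y -> dom P (x - y).
Proof. by move=> Px Py; rewrite -scaleN1r; apply: domD => //; apply: domZ. Qed.

Lemma appD x y : dom P x -> dom P y -> app P (x + y) = app P x + app P y.
Proof. by case: linP => _ _ appDZ Px Py; rewrite -[x in LHS]scale1r appDZ // scale1r. Qed.

Lemma app0 : app P 0 = 0.
Proof.
case: linP => P0 _ appDZ; have := appDZ 1 _ _ P0 P0; rewrite !scale1r !addr0 => h.
by apply: (addrI (app P 0)); rewrite addr0 -h.
Qed.

Lemma appZ a x : dom P x -> app P (a *: x) = a *: app P x.
Proof. by case: linP => P0 _ appDZ Px; rewrite -[a *: x]addr0 appDZ // app0 addr0. Qed.

Lemma appB x y : dom P x -> dom P y -> app P (x - y) = app P x - app P y.
Proof.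
move=> Px Py; have Pny : dom P (-1 *: y) by apply: domZ.
by rewrite -scaleN1r appD ?appZ // scaleN1r.
Qed.

End LinearOperator.

Section SelfAdjoint.
Variable P : op H.
Hypothesis saP : self_adjoint ip P.

Lemma sa_linear : op_linear P.
Proof. by case: saP. Qed.

Lemma sa_sym x y : dom P x -> dom P y -> ip (app P x) y = ip x (app P y).
Proof. by case: saP => _ [_ [_]]; apply. Qed.

Lemma sa_dom y z : (forall x, dom P x -> ip (app P x) y = ip x z) -> dom P y.
Proof. by case: saP => _ [_ [domP _]] yz; apply/domP; exists z. Qed.

Lemma sa_form_real y : dom P y -> Im (ip (app P y) y) = 0.
Proof.
move=> Py; have := sa_sym Py Py; rewrite [ip y _]ipC.
by case: (ip (app P y) y) => a b /= [] h; lra.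
Qed.

Lemma self_adjoint_closed : op_closed ip P.
Proof.
move=> u x y Pu ux Puy.
have adj : forall w, dom P w -> ip (app P w) x - ip w y = 0.
  apply: (eq0_of_Re_eq0 (f := fun w => ip (app P w) x - ip w y)) => w Pw.
    split; first exact: domZ sa_linear _ _ Pw.
    by rewrite /= (appZ sa_linear) // !ipZl mulrBr.
  apply: (vanishing_const (s := fun n =>
    Re (ip (app P (u n) - y) w) - Re (ip (u n - x) (app P w)))) => [n|].
    rewrite !ipBl !raddfB /= (Re_ipC (app P w) (u n)) (sa_sym Pw (Pu n)).
    by rewrite (Re_ipC w (app P (u n))) (Re_ipC (app P w) x) (Re_ipC w y); ring.
  by apply: vanishingB; apply: vanishing_Re_ip; apply: hconverges_vanishing.
have Px : dom P x.
  by apply: (sa_dom (z := y)) => w /adj /eqP; rewrite subr_eq0 => /eqP.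
split=> //; apply/eqP; rewrite -subr_eq0; apply/eqP.
case: saP => _ [dense _]; apply: (dense_orth_eq0 dense) => w Pw.
by rewrite ipBr -(sa_sym Pw Px) adj.
Qed.

Lemma positive_isotropic_orth y : op_positive ip P -> dom P y ->
  Re (ip (app P y) y) = 0 -> forall w, dom P w -> ip (app P y) w = 0.
Proof.
(* [<w, P y>] is linear in [w], as [eq0_of_Re_eq0] requires *)
move=> posP Py Pyy0 w Pw; rewrite -[ip _ _]conjcK -ipC.
apply/eqP; rewrite conjc_eq0; apply/eqP; move: w Pw.
apply: (eq0_of_Re_eq0 (f := fun w => ip w (app P y))) => w Pw.
  by split; [apply: domZ sa_linear _ _ Pw | rewrite ipZl].
rewrite Re_ipC; apply: (@quadratic_ge0_linear_eq0 _ _ (Re (ip (app P w) w))) => t.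
have Pyw : dom P (y + t%:C *: w) by apply: domD sa_linear _ _ Py (domZ sa_linear _ Pw).
have := posP _ Pyw; rewrite lecE => /andP[_].
rewrite (appD sa_linear Py (domZ sa_linear _ Pw)) (appZ sa_linear _ Pw).
rewrite ipDl !ipDr !ipZl !ipZr conjc_real (sa_sym Pw Py) !raddfD /= !Re_realM.
by rewrite (Re_ipC (app P y) w) Pyy0; nra.
Qed.

End SelfAdjoint.

Section Resolvent.
Variable P : op H.
Hypothesis saP : self_adjoint ip P.

Let linP := sa_linear saP.
Let g v := app P v + 'i *: v.

Lemma gD v w : dom P v -> dom P w -> g (v + w) = g v + g w.
Proof. by move=> Pv Pw; rewrite /g (appD linP) // scalerDr addrACA. Qed.

Lemma gZ a v : dom P v -> g (a *: v) = a *: g v.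
Proof. by move=> Pv; rewrite /g (appZ linP) // scalerDr !scalerA mulrC. Qed.

Lemma gB v w : dom P v -> dom P w -> g (v - w) = g v - g w.
Proof. by move=> Pv Pw; rewrite /g (appB linP) // scalerBr opprD addrACA. Qed.

Lemma sqnorm_g v : dom P v -> sqnorm (g v) = sqnorm (app P v) + sqnorm v.
Proof.
by move=> Pv; rewrite /g sqnormD ipZr Re_conjiM (sa_form_real saP Pv) sqnormZi; lra.
Qed.

Lemma orth_range_eq0 r : (forall w, dom P w -> ip (g w) r = 0) -> r = 0.
Proof.
move=> rg; have Pr : dom P r.
  apply: (sa_dom saP (z := 'i *: r)) => w /rg /eqP.
  by rewrite ipDl ipZl ipZr conj_i mulNr addr_eq0 => /eqP.
move: (rg r Pr); rewrite ipDl ipZl ip_sqnorm => /(congr1 (@complex.Im R)).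
by rewrite raddfD /= (sa_form_real saP Pr) => h; apply: sqnorm_eq0; lra.
Qed.

Hypothesis complete : forall u : nat -> H, hcauchy ip u -> exists l, hconverges ip u l.
Variable x : H.

Let F v := sqnorm (g v - x).

Lemma minimizer_orth u : dom P u -> (forall v, dom P v -> F u <= F v) ->
  forall w, dom P w -> ip (g w) (g u - x) = 0.
Proof.
move=> Pu umin; apply: (eq0_of_Re_eq0 (f := fun w => ip (g w) (g u - x))) => w Pw.
  by split; [apply: domZ linP _ _ Pw | rewrite /= gZ // ipZl].
rewrite /= Re_ipC; apply: Re_ip_eq0_of_min => t.
have Ptw : dom P (t%:C *: w) := domZ linP _ Pw.
by have := umin _ (domD linP Pu Ptw); rewrite /F gD // gZ // (addrAC (g u)).
Qed.

Let d := inf [set F v | v in dom P].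

Lemma has_inf_F : has_inf [set F v | v in dom P].
Proof.
split; first by exists (F 0), 0; first exact: dom0 linP.
by exists 0 => _ [v _ <-]; apply: sqnorm_ge0.
Qed.

Lemma inf_le_F v : dom P v -> d <= F v.
Proof. by move=> Pv; apply: ge_inf; [exact: has_inf_F.2 | exists v]. Qed.

Lemma minimizing_sequence :
  exists u : nat -> H, forall n, dom P (u n) /\ F (u n) < d + n.+1%:R^-1.
Proof.
suff /choice[u hu] : forall n, exists v, dom P v /\ F v < d + n.+1%:R^-1.
  by exists u.
move=> n; have n_gt0 : 0 < n.+1%:R^-1 :> R by rewrite invr_gt0 ltr0n.
by have [_ [v Pv <-] Fv] := inf_adherent n_gt0 has_inf_F; exists v.
Qed.

Section MinimizingSequence.
Variable u : nat -> H.
Hypothesis u_min : forall n, dom P (u n) /\ F (u n) < d + n.+1%:R^-1.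

(* Parallelogram law at the midpoint of [u m] and [u n], whose value is >= d. *)
Lemma minimizing_sequence_cauchy m n :
  sqnorm (g (u m) - g (u n)) <= 2 * m.+1%:R^-1 + 2 * n.+1%:R^-1.
Proof.
have [Pm Fm] := u_min m; have [Pn Fn] := u_min n.
set h := 2^-1 *: (u m + u n).
have Ph : dom P h := domZ linP _ (domD linP Pm Pn).
have hh : h + h = u m + u n.
  by rewrite -scalerDl (_ : 2^-1 + 2^-1 = 1) ?scale1r //; field.
have Fh : sqnorm (g (u m) - x + (g (u n) - x)) = 4 * F h.
  rewrite addrACA -opprD -gD // -hh gD // opprD addrACA sqnormD /F /sqnorm.
  by ring.
have := parallelogram (g (u m) - x) (g (u n) - x).
rewrite Fh (_ : g (u m) - x - (g (u n) - x) = g (u m) - g (u n)); last first.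
  by rewrite opprB addrA subrK.
have := inf_le_F Ph; rewrite /F in Fm Fn *.
by move: (m.+1%:R^-1) (n.+1%:R^-1) Fm Fn => em en; lra.
Qed.

End MinimizingSequence.

Lemma exists_minimizer : exists2 u, dom P u & forall v, dom P v -> F u <= F v.
Proof.
have [u u_min] := minimizing_sequence; have Pu n : dom P (u n) := (u_min n).1.
have bounds m n :
    sqnorm (u m - u n) <= 2 * m.+1%:R^-1 + 2 * n.+1%:R^-1 /\
    sqnorm (app P (u m) - app P (u n)) <= 2 * m.+1%:R^-1 + 2 * n.+1%:R^-1.
  have Pmn : dom P (u m - u n) := domB linP (Pu m) (Pu n).
  have := minimizing_sequence_cauchy u_min m n.
  rewrite -gB // sqnorm_g // -(appB linP) //.
  have := sqnorm_ge0 (u m - u n); have := sqnorm_ge0 (app P (u m - u n)).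
  by move: (m.+1%:R^-1) (n.+1%:R^-1) => em en; split; lra.
have en2 := vanishingZ 2 (@vanishing_inv_succ R).
have [l ul] := complete (hcauchy_of_bound en2 (fun m n => (bounds m n).1)).
have [y Puy] := complete (hcauchy_of_bound en2 (fun m n => (bounds m n).2)).
have [Pl Ply] := self_adjoint_closed saP Pu ul Puy.
exists l => // v Pv; apply: le_trans (inf_le_F Pv); rewrite -subr_le0 /F.
set a := g l - x.
(* [F (u n)] exceeds [F l] by at most a vanishing cross term *)
apply: (vanishing_lb (s := fun n => n.+1%:R^-1 -
  2 * (Re (ip (app P (u n) - y) a) - Re (ip (u n - l) ('i *: a))))) => [n|].
  have gun : g (u n) - x = a + (app P (u n) - y + 'i *: (u n - l)).
    by rewrite -Ply -(appB linP) // -/(g _) gB // /a (addrC (g l - x)) addrA subrK.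
  have := (u_min n).2; rewrite /F gun sqnormD Re_ipC ipDl [Re (_ + _)]raddfD /=.
  rewrite Re_ipZil.
  have := sqnorm_ge0 (app P (u n) - y + 'i *: (u n - l)).
  by move: (n.+1%:R^-1) => en; lra.
apply: vanishingB; first exact: vanishing_inv_succ.
by apply/vanishingZ/vanishingB; apply: vanishing_Re_ip; apply: hconverges_vanishing.
Qed.

Lemma resolvent_surj : exists2 u, dom P u & app P u + 'i *: u = x.
Proof.
have [u Pu umin] := exists_minimizer; exists u => //.
by apply/eqP; rewrite -subr_eq0; apply/eqP/orth_range_eq0/(minimizer_orth Pu umin).
Qed.

End Resolvent.

Section SquareZero.
Variables A B : op H.
Hypotheses (saA : self_adjoint ip A) (saB : self_adjoint ip B).
Hypothesis posAB : op_positive ip A \/ op_positive ip B.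
Hypothesis domAB : forall x, dom A x <-> dom B x.
Hypothesis domBA_AB : forall x, dom (op_mul B A) x -> dom (op_mul A B) x.
Hypothesis T2_le0 :
  op_le (op_mul (op_add A (op_scale 'i B)) (op_add A (op_scale 'i B))) (zero_op H).

Let linA := sa_linear saA.

Lemma kerT_orth y : dom A y -> app A y + 'i *: app B y = 0 ->
  forall w, dom A w -> ip (app A y) w = 0 /\ ip (app B y) w = 0.
Proof.
move=> Ay Ty0 w Aw; have By : dom B y by apply/domAB.
have eA : app A y = - ('i *: app B y) by apply/eqP; rewrite -addr_eq0 Ty0.
have eB : app B y = 'i *: app A y by rewrite eA scalerN scalerA mulii scaleN1r opprK.
case: posAB => [posA | posB].
- have reA : Re (ip (app A y) y) = 0.
    by rewrite eA ipNl ipZl raddfN /= Re_iM (sa_form_real saB By) !oppr0.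
  have Aw0 := positive_isotropic_orth saA posA Ay reA Aw.
  by rewrite eB ipZl Aw0 mulr0.
- have reB : Re (ip (app B y) y) = 0.
    by rewrite eB ipZl Re_iM (sa_form_real saA Ay) oppr0.
  have Bw0 := positive_isotropic_orth saB posB By reB (proj1 (domAB w) Aw).
  by rewrite eA ipNl ipZl Bw0 mulr0 oppr0.
Qed.

Lemma AB_eq0_domA2 u : dom A u -> dom A (app A u) -> app A u = 0 /\ app B u = 0.
Proof.
move=> Au AAu; have Bu : dom B u by apply/domAB.
have [_ ABu] : dom B u /\ dom A (app B u) by apply: domBA_AB; split=> //; apply/domAB.
set y := app A u + 'i *: app B u.
have Ay : dom A y := domD linA AAu (domZ linA _ ABu).
have By : dom B y by apply/domAB.
have [_ Ty0] := T2_le0 (conj (conj Au Bu) (conj Ay By)).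
have [Ayu Byu] := kerT_orth Ay Ty0 Au.
have y0 : y = 0.
  apply: ip_self_eq0; rewrite {1}/y ipDl ipZl (sa_sym saA Au Ay) (sa_sym saB Bu By).
  by rewrite ipC Ayu [ip u _]ipC Byu conjc0 mulr0 addr0.
split; apply: ip_self_eq0.
- exact: (kerT_orth Au y0 AAu).1.
- exact: (kerT_orth Au y0 ABu).2.
Qed.

Hypothesis complete : forall u : nat -> H, hcauchy ip u -> exists l, hconverges ip u l.

(* Writing [x = A u + i u], the vector [A u = x - i u] lies in [D(A)]. *)
Lemma AB_eq0 x : dom A x -> app A x = 0 /\ app B x = 0.
Proof.
move=> Ax; have [u Au ux] := resolvent_surj saA complete x.
have AAu : dom A (app A u).
  have -> : app A u = x - 'i *: u by rewrite -ux addrK.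
  by apply: (domB linA) => //; apply: (domZ linA).
have [Au0 _] := AB_eq0_domA2 Au AAu.
have Ax0 : app A x = 0 by rewrite -ux Au0 add0r (appZ linA) // Au0 scaler0.
by apply: AB_eq0_domA2 => //; rewrite Ax0; apply: dom0 linA.
Qed.

Lemma dom_A_full x : dom A x.
Proof.
apply: (sa_dom saA (z := 0)) => w Aw.
by rewrite (AB_eq0 Aw).1 ip0l ip0r.
Qed.

End SquareZero.

Lemma everywhere_zero_normal (T : op H) :
  (forall x, dom T x /\ app T x = 0) -> in_BH ip T /\ op_normal ip T.
Proof.
move=> T0; have norm0 : hnorm ip 0 = 0 by rewrite /hnorm ip0l sqrtr0.
have ipT0 x y : ip (app T x) y = ip x (app T y) by rewrite !(T0 _).2 ip0l ip0r.
split.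
  by split=> [x | ]; [exact: (T0 x).1 | exists 0 => x; rewrite (T0 x).2 norm0 mul0r].
split.
- split=> [| a x y _ _ | a x y _ _]; [exact: (T0 0).1 | exact: (T0 _).1 |].
  by rewrite !(T0 _).2 scaler0 addr0.
- move=> u x y _ _ Tuy; split; first exact: (T0 x).1.
  by rewrite (T0 x).2 (hconverges_eq0 _ Tuy) // => n; rewrite (T0 _).2.
- by move=> x e e0; exists x; rewrite subrr norm0 e0; split; first exact: (T0 x).1.
- exists T; split; last by split=> x Tx; split.
  split=> [y | x y _ _]; last exact: ipT0.
  by split=> _; [exists (app T y) => x _; exact: ipT0 | exact: (T0 y).1].
Qed.

End InnerProduct.

Theorem theorem2p8 (R : realType) (H : lmodType R[i]) (ip : H -> H -> R[i])
    (A B : op H) :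
  is_hilbert ip ->
  self_adjoint ip A -> self_adjoint ip B ->
  (op_positive ip A \/ op_positive ip B) ->
  (forall x : H, dom A x <-> dom B x) ->
  (forall x : H, dom (op_mul B A) x -> dom (op_mul A B) x) ->
  let T := op_add A (op_scale 'i B) in
  op_le (op_mul T T) (zero_op H) ->
  [/\ in_BH ip T, op_normal ip T & forall x : H, dom T x /\ app T x = 0].
Proof.
move=> [IP complete] saA saB posAB domAB domBA_AB T T2_le0.
have AB0 := AB_eq0 IP saA saB posAB domAB domBA_AB T2_le0 complete.
have domA := dom_A_full IP saA saB posAB domAB domBA_AB T2_le0 complete.
have T0 x : dom T x /\ app T x = 0.
  split; first by split; [| apply/domAB]; apply: domA.
  by rewrite /= (AB0 _ (domA x)).1 (AB0 _ (domA x)).2 scaler0 addr0.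
by have [bounded normal] := everywhere_zero_normal IP T0; split.
Qed.
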